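(* Let $X\subseteq G_n$ be a finite set of Hermitian Pauli operators. If there exist a Pauli operator $x$, a determining tree $\tau_x$ for $x$ over $X$, and a determining tree $\tau'_{-x}$ for $-x$ over $X$ such that $D(\tau_x)=D(\tau'_{-x})$, then $X$ is state-independently AvN in a partial closure, i.e. $\mathbb{T}_{\mathbb{Z}_2}(\overline{X})$ is inconsistent.
   Context: $G_n$ is the $n$-qubit Pauli group ($c\,P_1\otimes\cdots\otimes P_n$, $c\in\{\pm1,\pm i\}$, $P_j\in\{I,X,Y,Z\}$). The partial closure $\overline{X}$ of $X$ in $G_n$ is the smallest subset of $G_n$ containing $X\cup\{I\}$ that is closed under products of commuting pairs (if $a,b\in\overline{X}$ and $ab=ba$ then $ab\in\overline{X}$); equivalently the smallest abelian partial group in $G_n$ (with commutativity as the commeasurability relation and multiplication defined on commuting pairs) containing $X$. For a set $Y$ of Hermitian Pauli operators, its measurement cover $\mathcal{M}_Y$ is the family of maximal pairwise-commuting subsets of $Y$, and its linear theory is $\mathbb{T}_{\mathbb{Z}_2}(Y)=\{\langle C,r,a\rangle: C\in\mathcal{M}_Y,\ r:C\to\mathbb{Z}_2,\ a\in\mathbb{Z}_2,\ \prod_{y\in C}y^{r(y)}=(-1)^aI\}$; it is inconsistent if no $g:Y\to\mathbb{Z}_2$ satisfies $\sum_{y\in C}r(y)g(y)=a$ (mod 2) for all $\langle C,r,a\rangle$ in it. $X$ is state-independently AvN in a partial closure if $\mathbb{T}_{\mathbb{Z}_2}(\overline{X})$ is inconsistent. A determining tree $\tau_x$ for a Pauli operator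 $x$ over $X$ is a finite rooted tree whose nodes are labelled by Pauli operators and whose leaves are labelled by elements of $X$, such that the root is $x$, the children of any node pairwise commute, and every non-leaf node is the operator product of its children. The determining set $D(\tau_x)$ is the set of operators occurring an odd number of times as leaf labels of $\tau_x$. *)

From HB Require Import structures.
From mathcomp Require Import all_boot all_order all_algebra.
Set Implicit Arguments. Unset Strict Implicit. Unset Printing Implicit Defensive.
Import GRing.Theory.

Inductive pauli1 := PI | PX | PY | PZ.

Definition pauli1_code (p : pauli1) : 'I_4 :=
  match p with PI => inord 0 | PX => inord 1 | PY => inord 2 | PZ => inord 3 end.
Definition pauli1_decode (i : 'I_4) : pauli1 :=
  match val i with 0 => PI | 1 => PX | 2 => PY | _ => PZ end.
Lemma pauli1_codeK : cancel pauli1_code pauli1_decode.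
Proof. by case; rewrite /pauli1_decode /= inordK. Qed.
HB.instance Definition _ := Finite.copy pauli1 (can_type pauli1_codeK).

(* Product of single-qubit Paulis: P * Q = i^k R, returned as (k, R). *)
Definition mul1 (p q : pauli1) : 'Z_4 * pauli1 :=
  match p, q with
  | PI, r | r, PI => (0%R, r)
  | PX, PX | PY, PY | PZ, PZ => (0%R, PI)
  | PX, PY => (1%R, PZ) | PY, PX => ((-1)%R, PZ)
  | PY, PZ => (1%R, PX) | PZ, PY => ((-1)%R, PX)
  | PZ, PX => (1%R, PY) | PX, PZ => ((-1)%R, PY)
  end.

(* (k, P) represents the operator i^k P_1 (x) ... (x) P_n, k in Z_4.
   Distinct pairs represent distinct operators, so this is a faithful
   encoding of G_n. *)
Definition pauli (n : nat) := ('Z_4 * {ffun 'I_n -> pauli1})%type.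

Definition pid (n : nat) : pauli n := (0%R, [ffun => PI]).

Definition pmul (n : nat) (a b : pauli n) : pauli n :=
  ((a.1 + b.1 + \sum_(j < n) (mul1 (a.2 j) (b.2 j)).1)%R,
   [ffun j => (mul1 (a.2 j) (b.2 j)).2]).

Definition pneg (n : nat) (a : pauli n) : pauli n := ((a.1 + (2%:R)%R)%R, a.2).

Definition pcommute (n : nat) (a b : pauli n) : bool := pmul a b == pmul b a.

Definition hermitian (n : nat) (a : pauli n) : bool :=
  (a.1 == 0%R) || (a.1 == (2%:R)%R).

Definition partially_closed (n : nat) (S : {set pauli n}) : bool :=
  [forall a in S, forall b in S, pcommute a b ==> (pmul a b \in S)].

Definition pclosure (n : nat) (X : {set pauli n}) : {set pauli n} :=
  \bigcap_(S : {set pauli n} | (pid n |: X \subset S) && partially_closed S) S.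

Definition pairwise_commuting (n : nat) (C : {set pauli n}) : bool :=
  [forall a in C, forall b in C, pcommute a b].

Definition meas_cover (n : nat) (Y : {set pauli n}) : {set {set pauli n}} :=
  [set C | maxset (fun C : {set pauli n} => (C \subset Y) && pairwise_commuting C) C].

(* prod_{y in C} y^{r(y)}, r : C -> Z_2 (values outside C irrelevant) *)
Definition pprod_pow (n : nat) (C : {set pauli n}) (r : pauli n -> bool) : pauli n :=
  \big[@pmul n/pid n]_(y in C) (if r y then y else pid n).

Definition sign_id (n : nat) (a : bool) : pauli n :=
  if a then pneg (pid n) else pid n.

Definition in_theory (n : nat) (Y : {set pauli n}) (C : {set pauli n})
  (r : pauli n -> bool) (a : bool) : Prop :=
  C \in meas_cover Y /\ pprod_pow C r = sign_id n a.

Definition theory_inconsistent (n : nat) (Y : {set pauli n}) : Prop :=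
  ~ exists g : pauli n -> bool,
      forall (C : {set pauli n}) (r : pauli n -> bool) (a : bool),
        in_theory Y C r a ->
        \big[addb/false]_(y in C) (r y && g y) = a.

Inductive ptree (n : nat) := PNode of pauli n & seq (ptree n).

Definition plabel (n : nat) (t : ptree n) : pauli n :=
  let: PNode x _ := t in x.

Fixpoint wf_det_tree (n : nat) (X : {set pauli n}) (t : ptree n) : bool :=
  let: PNode x cs := t in
  match cs with
  | [::] => x \in X
  | _ :: _ =>
      pairwise (@pcommute n) (map (@plabel n) cs) &&
      (x == foldr (@pmul n) (pid n) (map (@plabel n) cs)) &&
      (fix all_wf (l : seq (ptree n)) : bool :=
         match l with [::] => true | c :: l' => wf_det_tree X c && all_wf l' end) cs
  end.

Definition is_det_tree (n : nat) (X : {set pauli n}) (x : pauli n) (t : ptree n) : Prop :=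
  plabel t = x /\ wf_det_tree X t.

Fixpoint leaves (n : nat) (t : ptree n) : seq (pauli n) :=
  let: PNode x cs := t in
  match cs with
  | [::] => [:: x]
  | _ :: _ =>
      (fix lv (l : seq (ptree n)) : seq (pauli n) :=
         match l with [::] => [::] | c :: l' => leaves c ++ lv l' end) cs
  end.

Definition det_set (n : nat) (t : ptree n) : {set pauli n} :=
  [set y | odd (count_mem y (leaves t))].

(* Suppose g : closure(X) -> Z_2 satisfied every equation of the linear
   theory.  The context {I} forces g(I) = 0 and {-I} forces g(-I) = 1, while
   for commuting Hermitian a, b the context {a, b, ab} has product
   a b (ab) = I, so g(ab) = g(a) + g(b).  Propagating this additivity up a
   determining tree, g(x) is the sum of g over the leaf labels, i.e. over
   D(tau_x); likewise for -x.  Hence D(tau_x) = D(tau'_-x) gives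
   g(x) = g(-x), and then g(-I) = g(x (-x)) = g(x) + g(-x) = 0. *)

From HB Require Import structures.
From mathcomp Require Import all_boot all_algebra ring.
From Stdlib Require List.
Set Implicit Arguments. Unset Strict Implicit. Unset Printing Implicit Defensive.
Import GRing.Theory.
Local Open Scope ring_scope.

Lemma mul1_assoc_phase p q r :
  (mul1 p q).1 + (mul1 (mul1 p q).2 r).1 = (mul1 q r).1 + (mul1 p (mul1 q r).2).1.
Proof. by case: p; case: q; case: r; apply/eqP. Qed.

Lemma mul1_assoc_label p q r : (mul1 (mul1 p q).2 r).2 = (mul1 p (mul1 q r).2).2.
Proof. by case: p; case: q; case: r. Qed.

Lemma mul1C_phase p q : (mul1 q p).1 = - (mul1 p q).1.
Proof. by case: p; case: q; apply/eqP. Qed.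

Lemma mul1Ip p : mul1 PI p = (0, p). Proof. by case: p. Qed.
Lemma mul1pI p : mul1 p PI = (0, p). Proof. by case: p. Qed.
Lemma mul1pp p : mul1 p p = (0, PI). Proof. by case: p. Qed.

Section PauliGroup.
Variable n : nat.
Implicit Types a b c : pauli n.

Lemma pmulA : associative (@pmul n).
Proof.
move=> a b c; rewrite /pmul /=; congr (_, _); last first.
  by apply/ffunP => j; rewrite !ffunE mul1_assoc_label.
set s1 := \sum_(j < n) _; set s2 := \sum_(j < n) _;
  set s3 := \sum_(j < n) _; set s4 := \sum_(j < n) _.
have E : s3 + s4 = s1 + s2.
  rewrite -!big_split; apply: eq_bigr => j _; rewrite !ffunE; exact: mul1_assoc_phase.
transitivity (a.1 + b.1 + c.1 + (s1 + s2)); first by ring.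
by rewrite -E; ring.
Qed.

Lemma pmul1p : left_id (pid n) (@pmul n).
Proof.
move=> a; rewrite /pmul /= big1 => [|j _]; last by rewrite ffunE mul1Ip.
rewrite add0r addr0 [a]surjective_pairing; congr (_, _).
by apply/ffunP => j; rewrite !ffunE mul1Ip.
Qed.

Lemma pmulp1 : right_id (pid n) (@pmul n).
Proof.
move=> a; rewrite /pmul /= big1 => [|j _]; last by rewrite ffunE mul1pI.
rewrite !addr0 [a]surjective_pairing; congr (_, _).
by apply/ffunP => j; rewrite !ffunE mul1pI.
Qed.

HB.instance Definition _ :=
  Monoid.isLaw.Build (pauli n) (pid n) (@pmul n) pmulA pmul1p pmulp1.

Lemma pmulpN a b : pmul a (pneg b) = pneg (pmul a b).
Proof. by rewrite /pmul /pneg /=; congr (_, _); ring. Qed.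

Lemma pmulNp a b : pmul (pneg a) b = pneg (pmul a b).
Proof. by rewrite /pmul /pneg /=; congr (_, _); ring. Qed.

Lemma hermitianE a : hermitian a = (a.1 + a.1 == 0).
Proof. by rewrite /hermitian; case: a => [[[|[|[|[|//]]]] ?] ?]. Qed.

Lemma hermitian_pid : hermitian (pid n).
Proof. by rewrite hermitianE addr0. Qed.

Lemma pmulpp a : hermitian a -> pmul a a = pid n.
Proof.
rewrite hermitianE /pmul /pid => /eqP aa; rewrite big1 => [|j _]; last by rewrite mul1pp.
by rewrite aa addr0; congr (_, _); apply/ffunP => j; rewrite !ffunE mul1pp.
Qed.

Lemma pcommute_refl a : pcommute a a.
Proof. exact: eqxx. Qed.

Lemma pcommute_sym a b : pcommute a b = pcommute b a.
Proof. exact: eq_sym. Qed.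

Lemma pcommute_pid a : pcommute a (pid n).
Proof. by rewrite /pcommute pmul1p pmulp1. Qed.

Lemma pcommuteN a b : pcommute a b -> pcommute a (pneg b).
Proof. by rewrite /pcommute pmulpN pmulNp => /eqP ->. Qed.

Lemma pcommuteM a b c : pcommute a b -> pcommute a c -> pcommute a (pmul b c).
Proof. by move=> /eqP ab /eqP ac; apply/eqP; rewrite pmulA ab -pmulA ac pmulA. Qed.

Lemma pcommute_foldr a s :
  all (pcommute a) s -> pcommute a (foldr (@pmul n) (pid n) s).
Proof.
elim: s => [|b s IHs] /=; first by rewrite pcommute_pid.
by case/andP=> cab /IHs; apply: pcommuteM.
Qed.

Lemma hermitianM a b :
  hermitian a -> hermitian b -> pcommute a b -> hermitian (pmul a b).
Proof.
rewrite !hermitianE => /eqP aa /eqP bb /eqP/(congr1 fst) /=.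
set S := \sum_(j < n) _.
rewrite (eq_bigr (fun j => - (mul1 (a.2 j) (b.2 j)).1)) => [|j _].
  2: exact: mul1C_phase.
rewrite sumrN -/S => ab_ba.
have SS : S + S = 0.
  by rewrite -(subrr (a.1 + b.1 + S)) {2}ab_ba; ring.
apply/eqP; transitivity (a.1 + a.1 + (b.1 + b.1) + (S + S)); first by ring.
by rewrite aa bb SS !addr0.
Qed.

End PauliGroup.

Section CommutingProducts.
Variables (T : eqType) (op : T -> T -> T).
Hypothesis opA : associative op.

Lemma foldr_op_pull x z (s : seq T) :
  all (fun y => op x y == op y x) s -> foldr op (op x z) s = op x (foldr op z s).
Proof.
elim: s => [|y s IHs] //= /andP[/eqP xy /IHs ->].
by rewrite opA -xy -opA.
Qed.

Lemma perm_foldr_commuting z (s1 s2 : seq T) :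
  perm_eq s1 s2 -> {in s1 &, forall x y, op x y = op y x} ->
  foldr op z s1 = foldr op z s2.
Proof.
elim: s1 s2 => [|x s1 IHs] s2 s12 comm.
  by move: s12; rewrite perm_sym => /perm_nilP ->.
have x_s2 : x \in s2 by rewrite -(perm_mem s12) mem_head.
case/splitPr: x_s2 s12 => p1 p2 s12.
have s1p : perm_eq s1 (p1 ++ p2).
  by rewrite -(perm_cons x) (perm_trans s12) // (perm_catCA p1 [:: x] p2).
rewrite /= (IHs _ s1p) => [|y y' ys y's]; last exact: comm (mem_behead _) (mem_behead _).
rewrite !foldr_cat /= foldr_op_pull //.
apply/allP => y p1y; apply/eqP/comm; first exact: mem_head.
by rewrite (perm_mem s12) mem_cat p1y.
Qed.

End CommutingProducts.

Definition solution n (Y : {set pauli n}) (g : pauli n -> bool) : Prop :=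
  forall C r a, in_theory Y C r a -> \big[addb/false]_(y in C) (r y && g y) = a.

Section Solutions.
Variables (n : nat) (Y : {set pauli n}) (g : pauli n -> bool).
Hypothesis gY : solution Y g.

Lemma solution_seq s c :
  uniq s -> {subset s <= Y} -> pairwise (@pcommute n) s ->
  foldr (@pmul n) (pid n) s = sign_id n c -> \big[addb/false]_(y <- s) g y = c.
Proof.
move=> s_uniq sY; rewrite (pairwise_all2rel (@pcommute_refl n) (@pcommute_sym n)).
move/allrelP=> comm prod_s.
set T := [set y in s].
(* the context is any maximal commuting set containing s, with r its indicator *)
have [C maxC sTC] :
    {C | maxset (fun C => (C \subset Y) && pairwise_commuting C) C & T \subset C}.
  apply: maxset_exists; apply/andP; split.
    by apply/subsetP => y; rewrite inE => /sY.
  apply/forall_inP => a; rewrite inE => sa.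
  by apply/forall_inP => b; rewrite inE; exact: comm.
have CT y : (y \in C) && (y \in T) = (y \in s).
  by rewrite inE; case s_y: (y \in s); rewrite ?andbF // (subsetP sTC) // inE.
have thC : in_theory Y C (mem T) c.
  split; first by rewrite inE.
  rewrite /pprod_pow -big_mkcondr (eq_bigl _ _ CT) -big_filter -foldrE /= -prod_s.
  apply: (perm_foldr_commuting (@pmulA n)).
    apply: uniq_perm; rewrite ?filter_uniq ?index_enum_uniq // => y.
    by rewrite mem_filter mem_index_enum andbT.
  by move=> a b; rewrite !mem_filter !mem_index_enum !andbT => sa sb; apply/eqP/comm.
by rewrite -(gY thC) big_uniq // -big_mkcondr (eq_bigl _ _ CT).
Qed.

Lemma solution_pid : pid n \in Y -> g (pid n) = false.
Proof.
move=> Y1; have := @solution_seq [:: pid n] false; rewrite big_seq1; apply=> //=.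
  by move=> y; rewrite inE => /eqP ->.
by rewrite pmulp1.
Qed.

Lemma solution_neg_pid : pneg (pid n) \in Y -> g (pneg (pid n)) = true.
Proof.
move=> YN1; have := @solution_seq [:: pneg (pid n)] true; rewrite big_seq1; apply=> //=.
  by move=> y; rewrite inE => /eqP ->.
by rewrite pmulp1.
Qed.

Lemma solution_mul a b :
  pid n \in Y -> a \in Y -> b \in Y -> pmul a b \in Y ->
  hermitian a -> hermitian b -> pcommute a b -> g (pmul a b) = g a (+) g b.
Proof.
move=> Y1 Ya Yb Yab ha hb cab.
(* contexts are sets, so {a, b, ab} is used only when its elements are distinct *)
have [->|a_neq1] := eqVneq a (pid n); first by rewrite pmul1p solution_pid.
have [->|b_neq1] := eqVneq b (pid n); first by rewrite pmulp1 solution_pid ?addbF.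
have [<-|a_neq_b] := eqVneq a b; first by rewrite pmulpp ?solution_pid ?addbb.
have ab_neq_a : pmul a b != a.
  by apply: contra_neq b_neq1 => ab_a; rewrite -[b]pmul1p -(pmulpp ha) -pmulA ab_a pmulpp.
have ab_neq_b : pmul a b != b.
  by apply: contra_neq a_neq1 => ab_b; rewrite -[a]pmulp1 -(pmulpp hb) pmulA ab_b pmulpp.
suff : \big[addb/false]_(y <- [:: a; b; pmul a b]) g y = false.
  by rewrite !big_cons big_nil addbF; case: (g a); case: (g b); case: (g (pmul a b)).
apply: solution_seq.
- by rewrite /= !inE negb_or a_neq_b eq_sym ab_neq_a eq_sym ab_neq_b.
- by move=> y; rewrite !inE => /or3P[] /eqP ->.
- by rewrite /= !andbT cab !pcommuteM ?pcommute_refl // pcommute_sym.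
- by rewrite /= pmulp1 pmulA pmulpp // hermitianM.
Qed.

End Solutions.

Section PartialClosure.
Variables (n : nat) (X : {set pauli n}).

Lemma pclosure_min (S : {set pauli n}) :
  pid n |: X \subset S -> partially_closed S -> pclosure X \subset S.
Proof. by move=> XS clS; apply: bigcap_inf; rewrite XS. Qed.

Lemma pclosure_pid : pid n \in pclosure X.
Proof. by apply/bigcapP => S /andP[XS _]; apply: (subsetP XS); rewrite setU11. Qed.

Lemma mem_pclosure y : y \in X -> y \in pclosure X.
Proof.
by move=> Xy; apply/bigcapP => S /andP[XS _]; apply: (subsetP XS); rewrite setU1r.
Qed.

Lemma pclosure_mul a b :
  a \in pclosure X -> b \in pclosure X -> pcommute a b -> pmul a b \in pclosure X.
Proof.
move=> /bigcapP Xa /bigcapP Xb cab; apply/bigcapP => S /[dup] XS /andP[_ clS].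
by move: clS => /forall_inP/(_ a (Xa S XS))/forall_inP/(_ b (Xb S XS))/implyP; apply.
Qed.

Lemma hermitian_pclosure :
  {in X, forall y, hermitian y} -> {in pclosure X, forall y, hermitian y}.
Proof.
move=> hX; suff /subsetP sub : pclosure X \subset [set y | hermitian y].
  by move=> y /sub; rewrite inE.
apply: pclosure_min.
  by apply/subsetP => y; rewrite !inE => /predU1P[->|/hX]; rewrite ?hermitian_pid.
apply/forall_inP => a; rewrite inE => ha; apply/forall_inP => b; rewrite inE => hb.
by apply/implyP => cab; rewrite inE hermitianM.
Qed.

End PartialClosure.

Lemma big_addb_odd_count (T : finType) (s : seq T) (F : T -> bool) :
  \big[addb/false]_(y <- s) F y =
  \big[addb/false]_(y in [set y | odd (count_mem y s)]) F y.
Proof.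
rewrite -big_undup_iterop_count big_mkcond (big_uniq _ (undup_uniq s)) big_mkcond.
rewrite [RHS]big_mkcond; apply: eq_bigr => y _; rewrite inE mem_undup Monoid.iteropE.
have [_|/count_memPn->] := boolP (y \in s); last by [].
by elim: (count_mem y s) => //= k ->; case: (odd k); case: (F y).
Qed.

Lemma ptree_ind_nested n (P : ptree n -> Prop) :
  (forall x cs, List.Forall P cs -> P (PNode x cs)) -> forall t, P t.
Proof.
move=> IH; fix F 1 => -[x cs]; apply: IH.
by elim: cs => [|c cs IHcs]; constructor => //; exact: F.
Qed.

Lemma wf_det_tree_node n (X : {set pauli n}) x c cs :
  wf_det_tree X (PNode x (c :: cs)) =
  [&& pairwise (@pcommute n) (map (@plabel n) (c :: cs)),
      x == foldr (@pmul n) (pid n) (map (@plabel n) (c :: cs)) &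
      all (wf_det_tree X) (c :: cs)].
Proof. by rewrite andbA. Qed.

Lemma leaves_node n x (c : ptree n) cs :
  leaves (PNode x (c :: cs)) = flatten (map (@leaves n) (c :: cs)).
Proof.
by elim: cs c => [|c' cs IHcs] c; rewrite ?cats0 //; move: (IHcs c') => /= <-.
Qed.

Section DeterminingTrees.
Variables (n : nat) (X Y : {set pauli n}) (g : pauli n -> bool).
Hypotheses (gY : solution Y g) (Y1 : pid n \in Y) (XY : {subset X <= Y}).
Hypothesis hY : {in Y, forall y, hermitian y}.
Hypothesis Ymul : {in Y &, forall a b, pcommute a b -> pmul a b \in Y}.

Lemma solution_foldr s :
  {subset s <= Y} -> pairwise (@pcommute n) s ->
  foldr (@pmul n) (pid n) s \in Y /\
  g (foldr (@pmul n) (pid n) s) = \big[addb/false]_(y <- s) g y.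
Proof.
elim: s => [|y s IHs] sY /=; first by rewrite big_nil (solution_pid gY).
have Yy : y \in Y by apply: sY; rewrite mem_head.
case/andP=> ys /IHs[z sz|Yp gp]; first by apply: sY; rewrite inE sz orbT.
have cyp := pcommute_foldr ys.
by rewrite big_cons (solution_mul gY) ?Ymul ?hY // gp.
Qed.

Lemma solution_det_tree t :
  wf_det_tree X t ->
  plabel t \in Y /\ g (plabel t) = \big[addb/false]_(y <- leaves t) g y.
Proof.
elim/ptree_ind_nested: t => x [|c cs] IH.
  by move=> /= Xx; rewrite big_seq1 XY.
rewrite wf_det_tree_node leaves_node => /and3P[pw /eqP-> wf].
have [Yl gl] : {subset map (@plabel n) (c :: cs) <= Y} /\
    \big[addb/false]_(y <- map (@plabel n) (c :: cs)) g y =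
    \big[addb/false]_(y <- flatten (map (@leaves n) (c :: cs))) g y.
  elim: (c :: cs) IH wf {pw} => [|d l IHl] /=; first by rewrite !big_nil.
  case/List.Forall_cons_iff=> IHd IHs /andP[/IHd[Yd gd] /(IHl IHs)[Yl gl]].
  split; first by move=> y; rewrite inE => /predU1P[->|/Yl].
  by rewrite big_cons big_cat gd gl.
have [Yx gx] := solution_foldr Yl pw.
by split; rewrite //= gx gl.
Qed.

End DeterminingTrees.

Theorem mainTheorem7 (n : nat) (X : {set pauli n}) :
  (forall y, y \in X -> hermitian y) ->
  forall (x : pauli n) (t t' : ptree n),
    is_det_tree X x t ->
    is_det_tree X (pneg x) t' ->
    det_set t = det_set t' ->
    theory_inconsistent (pclosure X).
Proof.
move=> hX x t t' [<- wf_t] [tx wf_t'] D_tt' [g gY].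
have hY := hermitian_pclosure hX.
have det_tree :=
  solution_det_tree gY (pclosure_pid X) (@mem_pclosure n X) hY (@pclosure_mul n X).
have [Yx gx] := det_tree t wf_t.
have [Ynx gnx] := det_tree t' wf_t'; rewrite tx in Ynx gnx.
have g_neg : g (pneg (plabel t)) = g (plabel t).
  by rewrite gx gnx !big_addb_odd_count -!/(det_set _) D_tt'.
have cxnx := pcommuteN (pcommute_refl (plabel t)).
have := solution_mul gY (pclosure_pid X) Yx Ynx (pclosure_mul Yx Ynx cxnx)
  (hY _ Yx) (hY _ Ynx) cxnx.
rewrite pmulpN pmulpp ?hY // g_neg addbb (solution_neg_pid gY) //.
by rewrite -(pmulpp (hY _ Yx)) -pmulpN pclosure_mul.
Qed.
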